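(* Let $\vartheta$ be a primitive random substitution. If $X_\vartheta$ contains a periodic element (some $x$ with $\sigma^n(x)=x$ for some $n\ge1$), then $\operatorname{Aut}(X_\vartheta)$ is residually finite.
   Context: A random substitution on a finite alphabet $\mathcal A$ is a map $\vartheta$ from $\mathcal A$ to non-empty finite sets of non-empty words, extended to words by concatenating choices and iterated. Legal words are subwords of words in some $\vartheta^p(a)$; $X_\vartheta\subseteq\mathcal A^{\mathbb Z}$ is the set of sequences all of whose subwords are legal, with shift $\sigma(x)_i=x_{i+1}$; $\operatorname{Aut}(X_\vartheta)$ is the group of shift-commuting homeomorphisms of $X_\vartheta$. $\vartheta$ is primitive if for some $p\ge1$ every letter occurs in some word of $\vartheta^p(b)$ for every $b\in\mathcal A$. *)

From HB Require Import structures.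
From mathcomp Require Import all_boot all_order all_algebra all_fingroup.
Set Implicit Arguments. Unset Strict Implicit. Unset Printing Implicit Defensive.

Local Open Scope ring_scope.

Definition rsubst (A : finType) := A -> seq (seq A).

Definition is_random_substitution (A : finType) (th : rsubst A) : Prop :=
  forall a : A, th a != [::] /\ all (fun w => w != [::]) (th a).

Definition rsubst_word (A : finType) (th : rsubst A) (w : seq A) : seq (seq A) :=
  foldr (fun a acc => [seq u ++ v | u <- th a, v <- acc]) [:: [::]] w.

Definition rsubst_set (A : finType) (th : rsubst A) (S : seq (seq A)) : seq (seq A) :=
  flatten (map (rsubst_word th) S).

Definition rsubst_iter (A : finType) (th : rsubst A) (p : nat) (a : A) : seq (seq A) :=
  iter p (rsubst_set th) [:: [:: a]].

Definition primitive (A : finType) (th : rsubst A) : Prop :=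
  exists p : nat, (1 <= p)%N /\
    forall a b : A, exists2 u, u \in rsubst_iter th p b & a \in u.

Definition legal (A : finType) (th : rsubst A) (w : seq A) : Prop :=
  exists (p : nat) (a : A), exists2 u, u \in rsubst_iter th p a & infix w u.

Definition fullshift (A : finType) := int -> A.

Definition shift (A : finType) (x : fullshift A) : fullshift A := fun i => x (i + 1).

Definition window (A : finType) (x : fullshift A) (i : int) (n : nat) : seq A :=
  [seq x (i + k%:Z) | k <- iota 0 n].

Definition in_X (A : finType) (th : rsubst A) (x : fullshift A) : Prop :=
  forall (i : int) (n : nat), legal th (window x i n).

Definition agree_on (A : finType) (n : nat) (x y : fullshift A) : Prop :=
  forall i : int, `|i| <= n%:Z -> x i = y i.

(* continuity on X (product topology, discrete alphabet) *)
Definition continuous_on_X (A : finType) (th : rsubst A)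
  (f : fullshift A -> fullshift A) : Prop :=
  forall x, in_X th x -> forall n : nat, exists m : nat,
    forall y, in_X th y -> agree_on m x y -> agree_on n (f x) (f y).

Definition is_aut (A : finType) (th : rsubst A) (f : fullshift A -> fullshift A) : Prop :=
  (forall x, in_X th x -> in_X th (f x)) /\
  continuous_on_X th f /\
  (forall x, in_X th x -> f (shift x) = shift (f x)) /\
  exists g : fullshift A -> fullshift A,
    (forall x, in_X th x -> in_X th (g x)) /\
    continuous_on_X th g /\
    (forall x, in_X th x -> g (f x) = x) /\
    (forall x, in_X th x -> f (g x) = x).

Definition aut_eq (A : finType) (th : rsubst A) (f g : fullshift A -> fullshift A) : Prop :=
  forall x, in_X th x -> f x = g x.

Definition aut_residually_finite (A : finType) (th : rsubst A) : Prop :=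
  forall f, is_aut th f -> ~ aut_eq th f id ->
    exists (gT : finGroupType) (phi : (fullshift A -> fullshift A) -> gT),
      (forall g h, is_aut th g -> is_aut th h -> aut_eq th g h -> phi g = phi h) /\
      (forall g h, is_aut th g -> is_aut th h -> phi (g \o h) = (phi g * phi h)%g) /\
      phi f != 1%g.

Definition has_periodic_point (A : finType) (th : rsubst A) : Prop :=
  exists x, in_X th x /\ exists n : nat, (1 <= n)%N /\ iter n (@shift A) x = x.

(* Fix a period N.  An automorphism commutes with the shift, so it maps the
   points of X of period N to points of period N; these form a finite set
   (they are determined by an N-letter word), on which Aut(X) therefore acts
   by permutations.  It remains to see that a non-trivial automorphism f moves
   some periodic point.  Primitivity makes periodic points dense: substituting
   into the powers v^k of the period word v of the given periodic point, and
   using that some realisation of theta^K(b) contains any prescribed legal word,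
   yields a legal periodic word around any central block of any x in X.  If
   f x <> x at coordinate i, continuity of f shows that f also moves a periodic
   point close enough to x, at the same coordinate. *)
From mathcomp Require Import all_boot all_order all_algebra all_fingroup zify.
From mathcomp Require Import boolp.
Set Implicit Arguments. Unset Strict Implicit. Unset Printing Implicit Defensive.
Import Order.TTheory GRing.Theory Num.Theory.

Section RandomSubstitutionWords.
Variables (A : finType) (th : rsubst A).

Definition rsubst_pow (K : nat) (s : seq A) : seq (seq A) :=
  iter K (rsubst_set th) [:: s].

Lemma rsubst_setP S t :
  reflect (exists2 s, s \in S & t \in rsubst_word th s) (t \in rsubst_set th S).
Proof. exact: flatten_mapP. Qed.

Lemma rsubst_word_cat s1 s2 t1 t2 :
  t1 \in rsubst_word th s1 -> t2 \in rsubst_word th s2 ->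
  t1 ++ t2 \in rsubst_word th (s1 ++ s2).
Proof.
elim: s1 t1 => [|a s1 IH] t1 /=; first by rewrite inE => /eqP ->.
case/flatten_mapP => u u_a /mapP [v v_s1 ->] t2_s2.
rewrite -catA; apply/flatten_mapP; exists u => //.
by apply/mapP; exists (v ++ t2); first exact: IH.
Qed.

Lemma iter_rsubst_set_sub K S S' : {subset S <= S'} ->
  {subset iter K (rsubst_set th) S <= iter K (rsubst_set th) S'}.
Proof.
elim: K => [|K IH] //= sub_S t /rsubst_setP [s s_S t_s].
by apply/rsubst_setP; exists s => //; apply: IH.
Qed.

Lemma rsubst_pow_trans K M s r t :
  r \in rsubst_pow M s -> t \in rsubst_pow K r -> t \in rsubst_pow (K + M) s.
Proof.
move=> r_s t_r; rewrite /rsubst_pow iterD.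
by apply: (iter_rsubst_set_sub (S := [:: r])) t_r => u; rewrite inE => /eqP ->.
Qed.

Lemma rsubst_pow_cat K s1 s2 t1 t2 :
  t1 \in rsubst_pow K s1 -> t2 \in rsubst_pow K s2 ->
  t1 ++ t2 \in rsubst_pow K (s1 ++ s2).
Proof.
elim: K t1 t2 => [|K IH] t1 t2 /=; first by rewrite !inE => /eqP -> /eqP ->.
move=> /rsubst_setP [r1 r1_s1 t1_r1] /rsubst_setP [r2 r2_s2 t2_r2].
by apply/rsubst_setP; exists (r1 ++ r2); [apply: IH | apply: rsubst_word_cat].
Qed.

Definition rep_seq (k : nat) (v : seq A) : seq A := flatten (nseq k v).

Lemma rep_seqS k v : rep_seq k.+1 v = v ++ rep_seq k v.
Proof. by []. Qed.

Lemma rsubst_pow_rep_seq K k v t :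
  t \in rsubst_pow K v -> rep_seq k t \in rsubst_pow K (rep_seq k v).
Proof.
move=> t_v; elim: k => [|k IH]; last by rewrite !rep_seqS; apply: rsubst_pow_cat.
elim: K {t_v} => [|K IHK] /=; first by rewrite inE.
by apply/rsubst_setP; exists [::]; rewrite ?inE.
Qed.

Lemma legal_infix s s' : legal th s -> infix s' s -> legal th s'.
Proof.
move=> [p [a [u u_a s_u]]] s'_s; exists p, a; exists u => //.
exact: infix_trans s'_s s_u.
Qed.

Hypothesis th_rs : is_random_substitution th.

Lemma rsubst_pow_inhabited K s : exists t, t \in rsubst_pow K s.
Proof.
have word_inh r : exists t, t \in rsubst_word th r.
  elim: r => [|a r [t t_r]] /=; first by exists [::]; rewrite inE.
  have [+ _] := th_rs a; case: (th a) => [|u us] // _.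
  exists (u ++ t); apply/flatten_mapP; exists u; first exact: mem_head.
  by apply/mapP; exists t.
elim: K => [|K [r r_s]] /=; first by exists s; rewrite inE.
by have [t t_r] := word_inh r; exists t; apply/rsubst_setP; exists r.
Qed.

Lemma rsubst_pow_infix M K a r s t :
  r \in rsubst_pow M a -> infix s r -> t \in rsubst_pow K s ->
  exists2 r', r' \in rsubst_pow (K + M) a & infix t r'.
Proof.
move=> r_a /infixP [l [l' r_eq]] t_s; subst r.
have [tl tl_l] := rsubst_pow_inhabited K l.
have [tl' tl'_l'] := rsubst_pow_inhabited K l'.
exists (tl ++ t ++ tl'); last by apply/infixP; exists tl, tl'.
by apply: rsubst_pow_trans r_a _; do 2?apply: rsubst_pow_cat.
Qed.

Lemma legal_rsubst_pow K s t : legal th s -> t \in rsubst_pow K s -> legal th t.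
Proof.
move=> [p [a [u u_a s_u]]] t_s.
have [r' r'_a t_r'] := rsubst_pow_infix u_a s_u t_s.
by exists (K + p)%N, a, r'.
Qed.

Hypothesis th_prim : primitive th.

Lemma legal_infix_rsubst_pow_letter w : legal th w ->
  exists K, forall b, exists2 r, r \in rsubst_pow K [:: b] & infix w r.
Proof.
move=> [p [a [u u_a w_u]]]; have [q [_ a_in]] := th_prim.
exists (p + q)%N => b; have [v v_b a_v] := a_in a b.
have a_infix : infix [:: a] v.
  by case/splitPr: a_v => l r; apply/infixP; exists l, r.
have [r' r'_b u_r'] := rsubst_pow_infix (K := p) v_b a_infix u_a.
by exists r' => //; apply: infix_trans w_u u_r'.
Qed.

(* Substituting letterwise into v^k keeps the same choice in every copy of v,
   and the first letter b of v is sent to a word containing w. *)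
Lemma legal_rep_seq_around v w : v != [::] ->
  (forall k, legal th (rep_seq k v)) -> legal th w ->
  exists l r, forall k, legal th (rep_seq k (l ++ w ++ r)).
Proof.
case: v => [|b v] // _ legal_v /legal_infix_rsubst_pow_letter [K inK].
have [r r_b /infixP [l [l' r_eq]]] := inK b; subst r.
have [t t_v] := rsubst_pow_inhabited K v.
exists l, (l' ++ t) => k.
apply: (legal_rsubst_pow (K := K) (legal_v k)); apply: rsubst_pow_rep_seq.
by have := rsubst_pow_cat r_b t_v; rewrite -!catA.
Qed.

End RandomSubstitutionWords.

Local Open Scope ring_scope.

Section PeriodicPoints.
Variables (A : finType) (th : rsubst A).

Definition periodic (N : nat) (y : fullshift A) : Prop :=
  forall i, y (i + N%:Z) = y i.

Lemma iter_shiftE n (y : fullshift A) i : iter n (@shift A) y i = y (i + n%:Z).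
Proof.
by elim: n i => [|n IH] i /=; [rewrite addr0 | rewrite /shift IH; congr y; lia].
Qed.

Lemma iter_shift_in_X n y : in_X th y -> in_X th (iter n (@shift A) y).
Proof.
move=> y_X i k; suff -> : window (iter n (@shift A) y) i k = window y (i + n%:Z) k.
  exact: y_X.
by apply: eq_map => j; rewrite iter_shiftE; congr y; lia.
Qed.

Lemma periodic_iter_shift N n y : periodic N y -> periodic N (iter n (@shift A) y).
Proof. by move=> y_N i; rewrite !iter_shiftE addrAC y_N. Qed.

Lemma periodic_mulz N y : periodic N y -> forall (q : int) i, y (i + q * N%:Z) = y i.
Proof.
have periodic_muln : periodic N y -> forall (q : nat) i, y (i + q%:Z * N%:Z) = y i.
  move=> y_N; elim=> [|q IH] i; first by rewrite mul0r addr0.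
  by rewrite -addn1 PoszD mulrDl mul1r addrA y_N IH.
move=> y_N [q|q] i; first exact: periodic_muln.
rewrite -(periodic_muln y_N q.+1 (i + Negz q * N%:Z)); congr y; rewrite NegzE; lia.
Qed.

Lemma periodic_modz N y i : periodic N y -> y (i %% N%:Z)%Z = y i.
Proof. by move=> y_N; rewrite {2}(divz_eq i N%:Z) addrC periodic_mulz. Qed.

Lemma window_cat (y : fullshift A) i m n :
  window y i (m + n) = window y i m ++ window y (i + m%:Z) n.
Proof.
rewrite /window iotaD map_cat; congr (_ ++ _).
rewrite -[in iota m _](addn0 m) iotaDl -map_comp.
by apply: eq_map => k /=; congr y; lia.
Qed.

Lemma window_modz N y i n : periodic N y -> window y i n = window y (i %% N%:Z)%Z n.
Proof.
move=> y_N; apply: eq_map => k.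
by rewrite -(periodic_modz _ y_N) -[in RHS](periodic_modz _ y_N) modzDml.
Qed.

Lemma infix_window (y : fullshift A) (s n M : nat) :
  (s + n <= M)%N -> infix (window y s%:Z n) (window y 0 M).
Proof.
move=> snM; apply/infixP; exists (window y 0 s), (window y (s + n)%N%:Z (M - (s + n))).
by rewrite -{1}(subnKC snM) !window_cat -catA !add0r.
Qed.

Lemma rep_seq_window N y k : periodic N y ->
  rep_seq k (window y 0 N) = window y 0 (N * k).
Proof.
move=> y_N; elim: k => [|k IH]; first by rewrite muln0.
rewrite mulnS window_cat rep_seqS IH; congr (_ ++ _).
by apply: eq_map => j; rewrite add0r addrAC y_N.
Qed.

Lemma nth_window a0 (y : fullshift A) i n k :
  (k < n)%N -> nth a0 (window y i n) k = y (i + k%:Z).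
Proof. by move=> kn; rewrite (nth_map 0%N) ?size_iota // nth_iota. Qed.

Variable a0 : A.

Definition cyclic_ext (v : seq A) : fullshift A :=
  fun i => nth a0 v (absz (i %% (size v)%:Z)%Z).

Lemma cyclic_ext_periodic v : periodic (size v) (cyclic_ext v).
Proof. by move=> i; rewrite /cyclic_ext modzDr. Qed.

Lemma cyclic_ext_nth v (k : nat) : (k < size v)%N -> cyclic_ext v k%:Z = nth a0 v k.
Proof. by move=> kv; rewrite /cyclic_ext modz_small //; lia. Qed.

Lemma cyclic_ext_eq v y : (0 < size v)%N ->
  periodic (size v) y -> (forall k, (k < size v)%N -> nth a0 v k = y k%:Z) ->
  cyclic_ext v = y.
Proof.
move=> v_gt0 y_v v_y; apply: funext => i; rewrite -(periodic_modz i y_v).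
have mod_ge0 : 0 <= (i %% (size v)%:Z)%Z by rewrite modz_ge0 // eqz_nat -lt0n.
have mod_lt : (i %% (size v)%:Z)%Z < (size v)%:Z by rewrite ltz_pmod // ltz_nat.
rewrite /cyclic_ext v_y; first by rewrite gez0_abs.
by rewrite -ltz_nat gez0_abs.
Qed.

Lemma cyclic_ext_in_X v : v != [::] ->
  (forall k, legal th (rep_seq k v)) -> in_X th (cyclic_ext v).
Proof.
move=> v_ne legal_v i n; have v_gt0 : (0 < size v)%N by rewrite lt0n size_eq0.
set s := absz (i %% (size v)%:Z)%Z.
have s_eq : (i %% (size v)%:Z)%Z = s%:Z by rewrite gez0_abs // modz_ge0 // eqz_nat -lt0n.
have s_lt : (s < size v)%N by rewrite -ltz_nat -s_eq ltz_pmod // ltz_nat.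
have v_window : window (cyclic_ext v) 0 (size v) = v.
  apply: (@eq_from_nth _ a0); rewrite size_map size_iota // => k kv.
  by rewrite nth_window // add0r cyclic_ext_nth.
rewrite (window_modz _ _ (cyclic_ext_periodic v)) s_eq.
apply: (legal_infix (legal_v n.+1)).
rewrite -{2}v_window rep_seq_window; last exact: cyclic_ext_periodic.
by apply: infix_window; nia.
Qed.

End PeriodicPoints.

Section Density.
Variables (A : finType) (th : rsubst A).
Hypotheses (th_rs : is_random_substitution th) (th_prim : primitive th).

Lemma periodic_legal_words : has_periodic_point th ->
  exists2 v : seq A, v != [::] & forall k, legal th (rep_seq k v).
Proof.
case=> y [y_X [n [n_gt0 yn]]].
have y_n : periodic n y by move=> i; rewrite -iter_shiftE yn.
exists (window y 0 n); first by rewrite -size_eq0 size_map size_iota -lt0n.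
by move=> k; rewrite rep_seq_window //; apply: y_X.
Qed.

Lemma periodic_points_dense x m : has_periodic_point th -> in_X th x ->
  exists N z, [/\ (0 < N)%N, in_X th z, periodic N z & agree_on m x z].
Proof.
move=> /periodic_legal_words [v v_ne legal_v] x_X.
set w := window x (- m%:Z) (m + m).+1.
have [l [r legal_lwr]] :=
  legal_rep_seq_around th_rs th_prim v_ne legal_v (x_X (- m%:Z) (m + m).+1).
set u := l ++ w ++ r.
have size_w : size w = (m + m).+1 by rewrite size_map size_iota.
have size_u : size u = (size l + (m + m).+1 + size r)%N by rewrite !size_cat size_w addnA.
exists (size u), (iter (m + size l) (@shift A) (cyclic_ext (x 0) u)); split.
- by rewrite size_u; lia.
- apply: iter_shift_in_X; apply: cyclic_ext_in_X legal_lwr.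
  by rewrite -size_eq0 !size_cat size_map size_iota addnS.
- by apply: periodic_iter_shift; apply: cyclic_ext_periodic.
move=> i /[!ler_norml] /andP [mi im]; set k := absz (i + m%:Z).
have k_lt : (k < (m + m).+1)%N by rewrite /k; lia.
rewrite iter_shiftE (_ : _ + _ = (size l + k)%N%:Z); last by rewrite /k; lia.
rewrite cyclic_ext_nth ?size_u; last by lia.
rewrite /u nth_cat ltnNge leq_addr addKn nth_cat size_w k_lt nth_window //.
by congr x; rewrite /k; lia.
Qed.

End Density.

Section PeriodicAction.
Variables (A : finType) (th : rsubst A) (a0 : A) (N : nat).
Hypothesis N_gt0 : (0 < N)%N.

Local Notation cyclic_ext := (cyclic_ext a0).

Definition period_tuple (y : fullshift A) : N.-tuple A := [tuple y i%:Z | i < N].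

Lemma cyclic_ext_period_tuple y : periodic N y -> cyclic_ext (period_tuple y) = y.
Proof.
move=> y_N; apply: cyclic_ext_eq; rewrite size_tuple // => k kN.
exact: (nth_mktuple _ _ (Ordinal kN)).
Qed.

Lemma period_tuple_cyclic_ext (t : N.-tuple A) : period_tuple (cyclic_ext t) = t.
Proof.
apply: eq_from_tnth => k; rewrite tnth_mktuple cyclic_ext_nth ?size_tuple //.
by rewrite (tnth_nth a0).
Qed.

Lemma periodic_cyclic_ext_tuple (t : N.-tuple A) : periodic N (cyclic_ext t).
Proof. by have := cyclic_ext_periodic a0 t; rewrite size_tuple. Qed.

Lemma aut_periodic g y : is_aut th g -> in_X th y -> periodic N y -> periodic N (g y).
Proof.
move=> [_ [_ [g_shift _]]] y_X y_N i; rewrite -!iter_shiftE.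
suff <- : g (iter N (@shift A) y) = iter N (@shift A) (g y).
  by congr g; apply: funext => j; rewrite iter_shiftE y_N.
elim: (N) => [|n IH] //=; rewrite g_shift ?IH //; exact: iter_shift_in_X.
Qed.

Definition tuple_action (g : fullshift A -> fullshift A) (t : N.-tuple A) : N.-tuple A :=
  if `[< in_X th (cyclic_ext t) >] then period_tuple (g (cyclic_ext t)) else t.

Lemma tuple_action_period_tuple g y : in_X th y -> periodic N y ->
  tuple_action g (period_tuple y) = period_tuple (g y).
Proof. by move=> y_X y_N; rewrite /tuple_action cyclic_ext_period_tuple // asboolT. Qed.

Lemma tuple_action_out g (t : N.-tuple A) :
  ~ in_X th (cyclic_ext t) -> tuple_action g t = t.
Proof. by move=> t_X; rewrite /tuple_action asboolF. Qed.

Lemma tuple_action_comp g h : is_aut th h ->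
  tuple_action (g \o h) =1 tuple_action g \o tuple_action h.
Proof.
move=> /[dup] h_aut [h_X _] t.
have [t_X | t_X] := asboolP (in_X th (cyclic_ext t)); last by rewrite /= !tuple_action_out.
have t_N := periodic_cyclic_ext_tuple t.
rewrite -(period_tuple_cyclic_ext t) /= !tuple_action_period_tuple //; first exact: h_X.
exact: aut_periodic.
Qed.

Lemma tuple_action_inj g : is_aut th g -> injective (tuple_action g).
Proof.
move=> /[dup] g_aut [g_X [_ [_ [g' [_ [_ [gK _]]]]]]].
apply: (can_inj (g := tuple_action g')) => t.
have [t_X | t_X] := asboolP (in_X th (cyclic_ext t)); last by rewrite !tuple_action_out.
have t_N := periodic_cyclic_ext_tuple t.
rewrite -(period_tuple_cyclic_ext t) !tuple_action_period_tuple ?gK //.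
- exact: g_X.
- exact: aut_periodic.
Qed.

Local Open Scope group_scope.

(* mathcomp multiplies permutations left to right, hence the inverse. *)
Definition perm_action (g : fullshift A -> fullshift A) : {perm N.-tuple A} :=
  if injectiveP (tuple_action g) is ReflectT g_inj then (perm g_inj)^-1 else 1.

Lemma perm_actionE g (g_inj : injective (tuple_action g)) :
  perm_action g = (perm g_inj)^-1.
Proof.
rewrite /perm_action; case: injectiveP => // g_inj'.
by congr _^-1; apply/permP => t; rewrite !permE.
Qed.

Lemma perm_actionM g h : is_aut th g -> is_aut th h ->
  perm_action (g \o h) = perm_action g * perm_action h.
Proof.
move=> g_aut h_aut; have gh_inj : injective (tuple_action (g \o h)).
  apply: (eq_inj (f := tuple_action g \o tuple_action h)) => [|t].
    by apply: inj_comp; apply: tuple_action_inj.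
  by rewrite tuple_action_comp.
rewrite (perm_actionE gh_inj) (perm_actionE (tuple_action_inj g_aut)).
rewrite (perm_actionE (tuple_action_inj h_aut)) -invMg; congr _^-1.
by apply/permP => t; rewrite permM !permE (tuple_action_comp g h_aut).
Qed.

Lemma perm_action_aut_eq g h : is_aut th g -> is_aut th h -> aut_eq th g h ->
  perm_action g = perm_action h.
Proof.
move=> g_aut h_aut gh; rewrite (perm_actionE (tuple_action_inj g_aut)).
rewrite (perm_actionE (tuple_action_inj h_aut)); congr _^-1.
by apply/permP => t; rewrite !permE /tuple_action; case: asboolP => // t_X; rewrite gh.
Qed.

Lemma perm_action_eq1 f z : is_aut th f -> in_X th z -> periodic N z ->
  perm_action f = 1 -> f z = z.
Proof.
move=> f_aut z_X z_N; rewrite (perm_actionE (tuple_action_inj f_aut)) => /eqP.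
rewrite invg_eq1 => /eqP /(congr1 (fun p : {perm _} => p (period_tuple z))).
rewrite permE perm1 tuple_action_period_tuple // => fz_z.
rewrite -[RHS](cyclic_ext_period_tuple z_N) -fz_z cyclic_ext_period_tuple //.
exact: aut_periodic.
Qed.

End PeriodicAction.

Theorem corollary6p1 (A : finType) (th : rsubst A) :
  is_random_substitution th -> primitive th -> has_periodic_point th ->
  aut_residually_finite th.
Proof.
move=> th_rs th_prim th_per f f_aut f_nid.
have [x x_X [i fxi]] : exists2 x, in_X th x & exists i, f x i <> x i.
  move/existsNP: f_nid => [x /not_implyP [x_X fx]]; exists x => //.
  by apply/existsNP => fx_eq; apply/fx/funext.
have [_ [f_cont _]] := f_aut; have [m f_m] := f_cont x x_X (absz i).
have [N [z [N_gt0 z_X z_N x_z]]] :=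
  periodic_points_dense th_rs th_prim (maxn m (absz i)) th_per x_X.
have i_le : `|i| <= (absz i)%:Z by rewrite abszE.
exists {perm N.-tuple A}, (perm_action th (x 0) N); split; [|split].
- exact: perm_action_aut_eq.
- exact: perm_actionM.
apply/eqP => /(perm_action_eq1 N_gt0 f_aut z_X z_N) fz; apply: fxi.
rewrite (f_m z) // ?fz ?x_z //; last by move=> j j_m; apply: x_z; lia.
by rewrite (le_trans i_le) // lez_nat leq_maxr.
Qed.
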